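(* Let $P=(T;U,V)$ be a 3M-DAP with $2 \le v < u$, and let $\lambda = x_u - x_v$, $\gamma = x_t/t$. Define \[ h(y) = \frac{1}{2}\,\frac{(u-v)y - \lambda}{\gamma(u-v) - \lambda}. \] Then $h$ is an increasing linear function, and applying $h$ entrywise to any feasible solution of $P$ yields a feasible solution of the 3M-DAP $\hat P = (\hat T; \hat U, \hat V)$ with the same matrix dimensions as $P$ and with required row sums $\hat x_t = t/2$ and $\hat x_u = \hat x_v$ (namely $\hat x_u = \hat x_v = \tfrac12 \frac{u x_v - v x_u}{\gamma(u-v)-\lambda}$); in particular $\hat P$ is in standard form and $P$ is equivalent to $\hat P$ with equivalence function $h$.
   Context: A three-matrix division and assignment problem (3M-DAP) $P=(T;U,V)$ is specified by integers $t,u,v$ (numbers of columns), integers $s_t, s_u, s_v$ (numbers of rows) and rationals $x_t, x_u, x_v$ (required row sums), subject to: $t \ge 2$, $u \ge 2$, $v \ge 1$; if $v = 1$ then $v s_v \le (t-2)s_t$; $s_t > 0$, $s_u > 0$, $s_v \ge 0$; $s_u u + s_v v = s_t t$; $s_u x_u + s_v x_v = s_t x_t$; and $x_u/u < x_v/v$. A feasible solution assigns real values to the entries of an $s_t\times t$ matrix $T$, an $s_u \times u$ matrix $U$ and an $s_v \times v$ matrix $V$ so that every row of $T$, $U$, $V$ sums to $x_t$, $x_u$, $x_v$ respectively, and the multiset of entries of $T$ equals the multiset union of the entries of $U$ and $V$. A 3M-DAP is in standard form if $x_u - x_v = 0$ and $x_t/t = 1/2$. Two 3M-DAPs are equivalent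 if their matrices have the same dimensions and there is an increasing linear function mapping the entries of solutions of the first to the entries of solutions of the second. *)

From HB Require Import structures.
From mathcomp Require Import all_boot all_order all_algebra.
Set Implicit Arguments. Unset Strict Implicit. Unset Printing Implicit Defensive.
Import Order.TTheory GRing.Theory Num.Theory.
Local Open Scope ring_scope.

(* Parameters of a three-matrix division and assignment problem (3M-DAP). *)
Record dap := DAP {
  dt : nat; du : nat; dv : nat;      (* numbers of columns t, u, v *)
  dst : nat; dsu : nat; dsv : nat;   (* numbers of rows s_t, s_u, s_v *)
  dxt : rat; dxu : rat; dxv : rat    (* required row sums x_t, x_u, x_v *)
}.

Definition is_3MDAP (P : dap) : Prop :=
  [/\ (2 <= dt P)%N, (2 <= du P)%N & (1 <= dv P)%N] /\
  (dv P = 1%N -> (dv P * dsv P <= (dt P - 2) * dst P)%N) /\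
  (0 < dst P)%N /\ (0 < dsu P)%N /\
  (dsu P * du P + dsv P * dv P = dst P * dt P)%N /\
  (dsu P)%:R * dxu P + (dsv P)%:R * dxv P = (dst P)%:R * dxt P /\
  dxu P / (du P)%:R < dxv P / (dv P)%:R.

Definition standard_form (P : dap) : Prop :=
  dxu P - dxv P = 0 /\ dxt P / (dt P)%:R = 1 / 2.

(* Multiset of entries of a matrix, as a sequence. *)
Definition entries (R : Type) m n (A : 'M[R]_(m, n)) : seq R :=
  [seq A p.1 p.2 | p <- enum {: 'I_m * 'I_n}].

Definition feasible (R : realFieldType) (P : dap)
  (T : 'M[R]_(dst P, dt P)) (U : 'M[R]_(dsu P, du P)) (V : 'M[R]_(dsv P, dv P))
  : Prop :=
  [/\ forall i, \sum_j T i j = ratr (dxt P),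
      forall i, \sum_j U i j = ratr (dxu P),
      forall i, \sum_j V i j = ratr (dxv P)
    & perm_eq (entries T) (entries U ++ entries V)].

Definition increasing_linear (R : realFieldType) (f : R -> R) : Prop :=
  exists a b : R, 0 < a /\ forall y, f y = a * y + b.

Definition equivalent_via (R : realFieldType) (P P' : dap) (f : R -> R) : Prop :=
  [/\ (dt P' = dt P /\ du P' = du P /\ dv P' = dv P),
      (dst P' = dst P /\ dsu P' = dsu P /\ dsv P' = dsv P),
      increasing_linear f
    & forall T U V, @feasible R P T U V ->
        exists T' U' V', @feasible R P' T' U' V' /\
          [/\ entries T' = map f (entries T),
              entries U' = map f (entries U)
            & entries V' = map f (entries V)]].

Definition lam (P : dap) : rat := dxu P - dxv P.
Definition gam (P : dap) : rat := dxt P / (dt P)%:R.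

Definition hfun (R : realFieldType) (P : dap) (y : R) : R :=
  2^-1 * (((du P)%:R - (dv P)%:R) * y - ratr (lam P))
        / ratr (gam P * ((du P)%:R - (dv P)%:R) - lam P).

Definition xhat (P : dap) : rat :=
  2^-1 * ((du P)%:R * dxv P - (dv P)%:R * dxu P)
        / (gam P * ((du P)%:R - (dv P)%:R) - lam P).

Definition Phat (P : dap) : dap :=
  DAP (dt P) (du P) (dv P) (dst P) (dsu P) (dsv P)
      ((dt P)%:R / 2) (xhat P) (xhat P).

From HB Require Import structures.
From mathcomp Require Import all_boot all_order all_algebra.
From mathcomp Require Import ring.

(* Write D = gamma (u - v) - lambda.  Counting the entries of T once by rows
   of T and once by rows of U and V gives s_t t D = (s_u + s_v)(u x_v - v x_u),
   which is positive because x_u / u < x_v / v; hence h has positive slope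
   (u - v) / 2D.  An affine map sends a row of n entries summing to x to a row
   summing to n h(x / n), and h(gamma) = 1/2 while
   u h(x_u / u) = v h(x_v / v) = xhat, so the image rows have the sums of Phat;
   the multiset condition is preserved because h is applied entrywise. *)

Set Implicit Arguments.
Unset Strict Implicit.
Unset Printing Implicit Defensive.
Import Order.TTheory GRing.Theory Num.Theory.
Local Open Scope ring_scope.

Lemma entries_map_mx (R S : Type) m n (f : R -> S) (A : 'M[R]_(m, n)) :
  entries (map_mx f A) = map f (entries A).
Proof. by rewrite /entries -map_comp; apply: eq_map => p; rewrite /= mxE. Qed.

Lemma sum_affine_mean (F : numFieldType) n (f : F -> F) (a b : F) (y : 'I_n -> F) :
  (forall z, f z = a * z + b) -> \sum_j f (y j) = n%:R * f ((\sum_j y j) / n%:R).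
Proof.
move=> fE; case: n y => [|n] y; first by rewrite !big_ord0 mul0r.
under eq_bigr => j _ do rewrite fE.
rewrite fE big_split /= -mulr_sumr sumr_const card_ord mulr_natl.
by field; rewrite addrC natr1 pnatr_eq0.
Qed.

Lemma subr_cross_gt0 (F : numFieldType) (a b x y : F) :
  0 < a -> 0 < b -> x / a < y / b -> 0 < a * y - b * x.
Proof.
move=> a_gt0 b_gt0; rewrite -subr_gt0 => lt_xy.
have -> : a * y - b * x = (y / b - x / a) * (a * b).
  by field; rewrite !gt_eqF.
by rewrite mulr_gt0 ?mulr_gt0.
Qed.

Definition hden (P : dap) : rat := gam P * ((du P)%:R - (dv P)%:R) - lam P.

Lemma hden_balance (P : dap) : (dt P != 0)%N ->
  (dsu P * du P + dsv P * dv P = dst P * dt P)%N ->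
  (dsu P)%:R * dxu P + (dsv P)%:R * dxv P = (dst P)%:R * dxt P ->
  (dst P * dt P)%:R * hden P
    = (dsu P + dsv P)%:R * ((du P)%:R * dxv P - (dv P)%:R * dxu P).
Proof.
case: P => t u v st su sv xt xu xv /= t_neq0 cols rows.
have -> : (st * t)%:R * hden (DAP t u v st su sv xt xu xv)
    = st%:R * xt * (u%:R - v%:R) - (su * u + sv * v)%:R * (xu - xv).
  by rewrite cols /hden /gam /lam /= natrM; field; rewrite pnatr_eq0.
by rewrite -rows natrD !natrM; ring.
Qed.

Lemma cross_gt0 (P : dap) : is_3MDAP P ->
  0 < (du P)%:R * dxv P - (dv P)%:R * dxu P.
Proof.
move=> [[_ u_ge2 v_ge1] [_ [_ [_ [_ [_ lt_ratio]]]]]].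
by apply: subr_cross_gt0; rewrite ?ltr0n // ltnW.
Qed.

Lemma hden_gt0 (P : dap) : is_3MDAP P -> 0 < hden P.
Proof.
move=> dapP; have [[t_ge2 _ _] [_ [st_gt0 [su_gt0 [cols [rows _]]]]]] := dapP.
have t_neq0 : (dt P != 0)%N by rewrite -lt0n ltnW.
have st_t_gt0 : 0 < (dst P * dt P)%:R :> rat by rewrite ltr0n muln_gt0 st_gt0 ltnW.
have su_sv_gt0 : 0 < (dsu P + dsv P)%:R :> rat by rewrite ltr0n addn_gt0 su_gt0.
rewrite -(pmulr_rgt0 _ st_t_gt0) (hden_balance t_neq0 cols rows).
by rewrite mulr_gt0 ?cross_gt0.
Qed.

Lemma xhat_gt0 (P : dap) : is_3MDAP P -> 0 < xhat P.
Proof.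
by move=> dapP; rewrite /xhat -/(hden P) divr_gt0 ?mulr_gt0 ?cross_gt0 ?hden_gt0.
Qed.

Lemma is_3MDAP_Phat (P : dap) : is_3MDAP P -> (dv P < du P)%N -> is_3MDAP (Phat P).
Proof.
move=> dapP lt_vu; have [dims [v1 [st_gt0 [su_gt0 [cols [rows _]]]]]] := dapP.
have [t_ge2 _ v_gt0] := dims.
have t_neq0 : (dt P != 0)%N by rewrite -lt0n ltnW.
(* Phat differs from P only in its row sums. *)
do 5 (split; first by []); split => /=.
  have hden_neq0 : hden P != 0 by rewrite gt_eqF ?hden_gt0.
  rewrite -mulrDl -natrD /xhat -/(hden P).
  set cross := (_ * dxv P - _).
  transitivity (2^-1 * ((dsu P + dsv P)%:R * cross) / hden P); first by ring.
  by rewrite -(hden_balance t_neq0 cols rows) natrM; field.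
rewrite ltr_pM2l ?xhat_gt0 // ltf_pV2 ?posrE ?ltr0n ?ltr_nat //.
exact: ltn_trans lt_vu.
Qed.

Lemma standard_form_Phat (P : dap) : (dt P != 0)%N -> standard_form (Phat P).
Proof. by move=> t_neq0; split; rewrite /= ?subrr //; field; rewrite pnatr_eq0. Qed.

Section Rescaling.

Variables (R : realFieldType) (P : dap).

Local Notation h := (@hfun R P).

Lemma hfunE y : h y = 2^-1 * ((du P)%:R - (dv P)%:R) / ratr (hden P) * y + h 0.
Proof. by rewrite /hfun -/(hden P); ring. Qed.

Lemma increasing_linear_hfun : 0 < hden P -> (dv P < du P)%N -> increasing_linear h.
Proof.
move=> hden_pos lt_vu; exists (2^-1 * ((du P)%:R - (dv P)%:R) / ratr (hden P)), (h 0).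
split; last exact: hfunE.
by rewrite divr_gt0 ?ltr0q // mulr_gt0 ?invr_gt0 ?ltr0n // subr_gt0 ltr_nat.
Qed.

Lemma ratr_hden :
  ratr (hden P) = ((du P)%:R - (dv P)%:R) * ratr (gam P) - ratr (lam P) :> R.
Proof. by rewrite /hden rmorphB rmorphM /= rmorphB !rmorph_nat mulrC. Qed.

Lemma hfun_gam : hden P != 0 -> h (ratr (gam P)) = 2^-1.
Proof.
move=> hden_neq0.
by rewrite /hfun -/(hden P) -ratr_hden -mulrA divff ?mulr1 ?fmorph_eq0.
Qed.

Lemma hfun_mean_xu : (du P != 0)%N -> hden P != 0 ->
  (du P)%:R * h (ratr (dxu P) / (du P)%:R) = ratr (xhat P).
Proof.
move=> u_neq0 hden_neq0; have d_neq0 : ratr (hden P) != 0 :> R by rewrite fmorph_eq0.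
rewrite /hfun /xhat -/(hden P) fmorph_div /=; move: (ratr (hden P)) d_neq0 => d d_neq0.
rewrite /lam !(rmorphM, rmorphB, fmorphV, rmorph_nat) /=.
by field; rewrite pnatr_eq0 d_neq0.
Qed.

Lemma hfun_mean_xv : (dv P != 0)%N -> hden P != 0 ->
  (dv P)%:R * h (ratr (dxv P) / (dv P)%:R) = ratr (xhat P).
Proof.
move=> v_neq0 hden_neq0; have d_neq0 : ratr (hden P) != 0 :> R by rewrite fmorph_eq0.
rewrite /hfun /xhat -/(hden P) fmorph_div /=; move: (ratr (hden P)) d_neq0 => d d_neq0.
rewrite /lam !(rmorphM, rmorphB, fmorphV, rmorph_nat) /=.
by field; rewrite pnatr_eq0 d_neq0.
Qed.

Lemma feasible_Phat T U V : is_3MDAP P -> @feasible R P T U V ->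
  @feasible R (Phat P) (map_mx h T) (map_mx h U) (map_mx h V).
Proof.
move=> dapP [rowsT rowsU rowsV perm_TUV]; have [[_ u_ge2 v_ge1] _] := dapP.
have hden_neq0 : hden P != 0 by rewrite gt_eqF ?hden_gt0.
have row_sum m n (A : 'M[R]_(m, n)) i :
    \sum_j map_mx h A i j = n%:R * h ((\sum_j A i j) / n%:R).
  by under eq_bigr do rewrite mxE; exact: sum_affine_mean hfunE.
split => /= [i|i|i|].
- rewrite row_sum rowsT.
  have -> : ratr (dxt P) / (dt P)%:R = ratr (gam P) :> R.
    by rewrite fmorph_div /= rmorph_nat.
  by rewrite hfun_gam // fmorph_div /= !rmorph_nat.
- by rewrite row_sum rowsU hfun_mean_xu // -lt0n ltnW.
- by rewrite row_sum rowsV hfun_mean_xv // -lt0n.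
- by rewrite !entries_map_mx -map_cat perm_map.
Qed.

Lemma equivalent_via_Phat :
  is_3MDAP P -> (dv P < du P)%N -> equivalent_via P (Phat P) h.
Proof.
move=> dapP lt_vu; split; [by [] | by [] | | move=> T U V feasTUV].
  exact: increasing_linear_hfun (hden_gt0 dapP) lt_vu.
exists (map_mx h T), (map_mx h U), (map_mx h V).
by split; [exact: feasible_Phat | rewrite !entries_map_mx].
Qed.

End Rescaling.

Theorem theorem2 (R : realFieldType) (P : dap) :
  is_3MDAP P -> (2 <= dv P)%N -> (dv P < du P)%N ->
  [/\ increasing_linear (@hfun R P),
      (forall T U V, @feasible R P T U V ->
         @feasible R (Phat P) (map_mx (@hfun R P) T) (map_mx (@hfun R P) U)
                              (map_mx (@hfun R P) V)),
      is_3MDAP (Phat P) /\ standard_form (Phat P),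
      dxt (Phat P) = (dt P)%:R / 2 /\ dxu (Phat P) = dxv (Phat P)
    & equivalent_via P (Phat P) (@hfun R P)].
Proof.
move=> dapP _ lt_vu; have [[t_ge2 _ _] _] := dapP.
split => //.
- exact: increasing_linear_hfun (hden_gt0 dapP) lt_vu.
- by move=> T U V; apply: feasible_Phat.
- by split; [apply: is_3MDAP_Phat | apply: standard_form_Phat; rewrite -lt0n ltnW].
- exact: equivalent_via_Phat.
Qed.
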